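(* For every integer $k$ with $1\le k\le p$, the mechanism $RC_k$ subgame perfect implements the supermajority rule $Maj_k$: for every preference profile $R$, every subgame-perfect equilibrium yields the outcome $Maj_k(R)$, and some subgame-perfect equilibrium yields $Maj_k(R)$.
   Context: Agents $I=\{1,\dots,n\}$, $n=2p+1$, with complete information; options $A=\{sq,x\}$ (status quo and alternative); strict preferences over $A$; lotteries compared by stochastic dominance (an agent preferring $y$ weakly (strictly) prefers $\beta$ to $\eta$ iff $\beta(y)\ge\eta(y)$ ($>$)). Supermajority rule: $Maj_k(R)=x$ if $|\{i: x\,R_i\,sq\}|\ge p+k$, and $Maj_k(R)=sq$ otherwise. Mechanism $RC_k$: Voting stage: each agent simultaneously votes $v_i\in A$; the profile $v$ and the winner are announced, the winner being $x$ if at least $p+k$ agents vote $x$ and $sq$ otherwise. Confirmation stage: let $\bar t=p+k$ if $sq$ is the Voting-stage winner and $\bar t=p+2-k$ otherwise; $\bar t$ agents are drawn uniformly at random and ordered uniformly, $\pi_1,\dots,\pi_{\bar t}$; sequentially, as long as nobody has announced $Y$, agent $\pi_t$ announces $Y$ or $N$. If some agent announces $Y$ the outcome is the Voting-stage winner; if all announce $N$, the outcome is the lottery assigning to each option its share of Voting-stage votes ($|\{i:v_i=y\}|/n$ for $y\in A$). *)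

(* Probabilities are rationals (all probabilities in the
   mechanism RC_k are rational). *)
From HB Require Import structures.
From mathcomp Require Import all_boot all_order all_algebra.
Set Implicit Arguments. Unset Strict Implicit. Unset Printing Implicit Defensive.
Import Order.TTheory GRing.Theory Num.Theory.
Local Open Scope ring_scope.

Inductive opt := SQ | X.
Definition opt_eqb (a b : opt) : bool :=
  match a, b with SQ, SQ | X, X => true | _, _ => false end.
Lemma opt_eqP : Equality.axiom opt_eqb.
Proof. by case; case; constructor. Qed.
HB.instance Definition _ := hasDecEq.Build opt opt_eqP.

(* Agents I = {1,...,n}, n = 2p+1 (here indexed 0..2p). *)
Definition agent (p : nat) := 'I_((2 * p).+1).

(* A strict preference over the two options is determined by the top option:
   R i = the option agent i strictly prefers. *)
Definition profile (p : nat) := agent p -> opt.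

Definition lottery := opt -> rat.
Definition dirac (y : opt) : lottery := fun z => if z == y then 1 else 0.

(* Stochastic dominance: an agent preferring [top] strictly prefers b to e
   iff b(top) > e(top). *)
Definition sprefers (top : opt) (b e : lottery) : Prop := e top < b top.

Definition Maj (p k : nat) (R : profile p) : opt :=
  if (p + k <= #|[set i | R i == X]|)%N then X else SQ.

Definition votes (p : nat) := {ffun agent p -> opt}.

Definition vwinner (p k : nat) (v : votes p) : opt :=
  if (p + k <= #|[set i | v i == X]|)%N then X else SQ.

(* number of agents drawn in the confirmation stage *)
Definition tbar (p k : nat) (v : votes p) : nat :=
  if vwinner k v == SQ then (p + k)%N else (p + 2 - k)%N.

Definition vshare (p : nat) (v : votes p) : lottery :=
  fun y => (#|[set i | v i == y]|)%:R / ((2 * p).+1)%:R.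

(* A (pure) strategy: a vote, and for each confirmation-stage history
   (announced vote profile v, drawn ordered sequence pi, position t at which
   all previous drawn agents announced N) an announcement (true = Y, false = N). *)
Record strategy (p : nat) := Strategy {
  vote : opt;
  confirm : votes p -> seq (agent p) -> nat -> bool }.

Definition sprofile (p : nat) := agent p -> strategy p.

Definition votes_of (p : nat) (s : sprofile p) : votes p :=
  [ffun i => vote (s i)].

(* Play of the confirmation stage from position t (the remaining drawn
   agents are [rest]), all previous drawn agents having announced N. *)
Fixpoint conf_run (p k : nat) (s : sprofile p) (v : votes p)
    (pi : seq (agent p)) (t : nat) (rest : seq (agent p)) : lottery :=
  match rest with
  | [::] => vshare v
  | i :: rest' =>
      if confirm (s i) v pi t then dirac (vwinner k v)
      else conf_run k s v pi t.+1 rest'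
  end.

Definition node_out (p k : nat) (s : sprofile p) (v : votes p)
    (pi : seq (agent p)) (t : nat) : lottery :=
  conf_run k s v pi t (drop t pi).

Definition chance_out (p k : nat) (s : sprofile p) (v : votes p) : lottery :=
  fun y =>
    (\sum_(pi : (tbar k v).-tuple (agent p) | uniq pi) node_out k s v pi 0 y)
    / (#|[set pi : (tbar k v).-tuple (agent p) | uniq pi]|)%:R.

Definition game_out (p k : nat) (s : sprofile p) : lottery :=
  chance_out k s (votes_of s).

Definition deviate (p : nat) (s : sprofile p) (i : agent p) (si : strategy p)
  : sprofile p := fun j => if j == i then si else s j.

(* Subgame-perfect equilibrium of RC_k at profile R: in every subgame (the
   whole game, every chance node after the Voting stage, every decision node
   of the Confirmation stage), no agent has a deviation yielding a lottery he
   strictly prefers (stochastic dominance). *)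
Definition SPE (p k : nat) (R : profile p) (s : sprofile p) : Prop :=
  (forall i si, ~ sprefers (R i) (game_out k (deviate s i si)) (game_out k s))
  /\ (forall (v : votes p) i si,
        ~ sprefers (R i) (chance_out k (deviate s i si) v) (chance_out k s v))
  /\ (forall (v : votes p) (pi : (tbar k v).-tuple (agent p)), uniq pi ->
      forall t, (t < tbar k v)%N -> forall i si,
        ~ sprefers (R i) (node_out k (deviate s i si) v pi t)
                         (node_out k s v pi t)).

From HB Require Import structures.
From mathcomp Require Import all_boot all_order all_algebra.
From mathcomp Require Import zify lra.
Set Implicit Arguments. Unset Strict Implicit. Unset Printing Implicit Defensive.
Import Order.TTheory GRing.Theory Num.Theory.
Local Open Scope ring_scope.

(* Fix the announced votes v, with winner w.  Backward induction pins down the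
   outcome of every confirmation subgame: it is w for sure as soon as one of
   the agents still to be drawn prefers w, and the vote-share lottery
   otherwise (an agent who dislikes w can only lose by confirming it, and is
   indifferent exactly when the shares already put all mass on w).  Averaging
   over the draw, w is obtained for sure iff fewer than tbar agents dislike
   it, i.e. iff w = Maj_k(R).  If the winner in an SPE were not Maj_k(R), some
   agent voted for it against his preference; switching his vote either keeps
   the winner and strictly raises his option's share in a lottery that is
   reached with positive probability, or makes his option win for sure
   instead of with probability below one.  Conversely, voting truthfully and
   confirming iff one prefers the winner is an SPE. *)

Section UniformAverage.
Variables (T : finType) (K : numFieldType) (n : nat).
Implicit Types (F G : n.-tuple T -> K) (S : {set T}).

Definition uavg F : K :=
  (\sum_(pi : n.-tuple T | uniq pi) F pi)
    / #|[set pi : n.-tuple T | uniq pi]|%:R.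

Lemma exists_uniq_tuple_sub S :
  (n <= #|S|)%N -> exists2 pi : n.-tuple T, uniq pi & {subset pi <= S}.
Proof.
move=> leS; have sz : size (take n (enum S)) == n by rewrite size_takel -?cardE.
exists (Tuple sz); first by rewrite take_uniq ?enum_uniq.
by move=> j /mem_take; rewrite mem_enum.
Qed.

Lemma uniq_tuple_sub_card S (pi : n.-tuple T) :
  uniq pi -> {subset pi <= S} -> (n <= #|S|)%N.
Proof.
move=> /card_uniqP card_pi sub_pi_S.
by rewrite -(size_tuple pi) -card_pi; apply/subset_leq_card/subsetP.
Qed.

Lemma card_uniq_tuples_gt0 :
  (n <= #|T|)%N -> (0 < #|[set pi : n.-tuple T | uniq pi]|)%N.
Proof.
rewrite -cardsT => /exists_uniq_tuple_sub[pi uniq_pi _].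
by rewrite card_gt0; apply/set0Pn; exists pi; rewrite inE.
Qed.

Lemma eq_uavg F G : (forall pi : n.-tuple T, uniq pi -> F pi = G pi) -> uavg F = uavg G.
Proof. by move=> eqFG; rewrite /uavg (eq_bigr _ eqFG). Qed.

Lemma uavg_cst c : (n <= #|T|)%N -> uavg (fun _ => c) = c.
Proof.
move=> /card_uniq_tuples_gt0 N_gt0; rewrite /uavg.
have -> : \sum_(pi : n.-tuple T | uniq pi) c
          = \sum_(pi in [set pi : n.-tuple T | uniq pi]) c.
  by apply: eq_bigl => pi; rewrite inE.
by rewrite sumr_const -[c *+ _]mulr_natr mulfK // pnatr_eq0 -lt0n.
Qed.

Lemma ler_uavg F G : (forall pi : n.-tuple T, uniq pi -> F pi <= G pi) -> uavg F <= uavg G.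
Proof. by move=> leFG; rewrite ler_wpM2r ?invr_ge0 ?ler0n // ler_sum. Qed.

Lemma ltr_uavg F G : (forall pi : n.-tuple T, uniq pi -> F pi <= G pi) ->
  (exists2 pi : n.-tuple T, uniq pi & F pi < G pi) -> uavg F < uavg G.
Proof.
move=> leFG [pi0 uniq_pi0 ltFG0].
have N_gt0 : (0 < #|[set pi : n.-tuple T | uniq pi]|)%N.
  by rewrite card_gt0; apply/set0Pn; exists pi0; rewrite inE.
rewrite ltr_pM2r ?invr_gt0 ?ltr0n // (bigD1 pi0) //= [ltRHS](bigD1 pi0) //=.
by rewrite ltr_leD // ler_sum // => pi /andP[/leFG].
Qed.

End UniformAverage.

Lemma neq_opt_eq (w y z : opt) : y != w -> z != w -> y = z.
Proof. by case: w; case: y; case: z. Qed.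

Lemma not_sprefers y (b e : lottery) : ~ sprefers y b e <-> b y <= e y.
Proof. by rewrite /sprefers leNgt; split => /negP. Qed.

Lemma dirac_ge0 w y : 0 <= dirac w y.
Proof. by rewrite /dirac; case: ifP. Qed.

Lemma dirac_le1 w y : dirac w y <= 1.
Proof. by rewrite /dirac; case: ifP. Qed.

Section Votes.
Variable p : nat.
Implicit Types (v : votes p) (f : agent p -> opt).

Lemma card_opt_neq f y :
  #|[set j | f j != y]| = ((2 * p).+1 - #|[set j | f j == y]|)%N.
Proof.
rewrite -[X in (X - _)%N](card_ord (2 * p).+1) -(cardsC [set j | f j == y]).
by rewrite addKn; apply: eq_card => j; rewrite !inE.
Qed.

Lemma set_opt_neq f y z : z != y -> [set j | f j != y] = [set j | f j == z].
Proof. by move=> zy; apply/setP => j; rewrite !inE; case: (f j) y z zy => [] [] []. Qed.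

Lemma vshare_ge0 v y : 0 <= vshare v y.
Proof. by rewrite divr_ge0 ?ler0n. Qed.

Lemma vshare_le1 v y : vshare v y <= 1.
Proof.
rewrite ler_pdivrMr ?ltr0n // mul1r ler_nat.
by rewrite -[X in (_ <= X)%N](card_ord (2 * p).+1) max_card.
Qed.

Lemma vshare_add v : vshare v SQ + vshare v X = 1.
Proof.
rewrite -mulrDl -natrD -(set_opt_neq v (isT : SQ != X)) card_opt_neq.
by rewrite subnK ?divff ?pnatr_eq0 // -[X in (_ <= X)%N](card_ord (2 * p).+1) max_card.
Qed.

Lemma vshare_lt1 v i y : v i != y -> vshare v y < 1.
Proof.
move=> viy; rewrite ltr_pdivrMr ?ltr0n // mul1r ltr_nat.
rewrite -[X in (_ < X)%N](card_ord (2 * p).+1) -cardsT proper_card //.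
by apply/properP; split; [apply/subsetP | exists i; rewrite ?inE].
Qed.

Lemma ltr_vshare v v' y :
  (#|[set j | v j == y]| < #|[set j | v' j == y]|)%N -> vshare v y < vshare v' y.
Proof. by move=> lt_card; rewrite ltr_pM2r ?invr_gt0 ?ltr0n // ltr_nat. Qed.

Lemma vshare_eq_dirac v w : 1 <= vshare v w -> vshare v =1 dirac w.
Proof.
move=> ge1 y; have := vshare_add v; have := vshare_ge0 v SQ; have := vshare_ge0 v X.
by case: w ge1; case: y; rewrite /dirac /=; lra.
Qed.

Lemma vshare_ge1 v y w : y != w -> vshare v y <= 0 -> 1 <= vshare v w.
Proof.
have := vshare_add v; have := vshare_ge0 v SQ; have := vshare_ge0 v X.
by case: w; case: y => //=; lra.
Qed.

Lemma card_set_vote_lt v v' i y : (forall j, j != i -> v' j = v j) ->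
  v i != y -> v' i == y ->
  (#|[set j | v j == y]| < #|[set j | v' j == y]|)%N.
Proof.
move=> eq_v' viy v'iy; apply/proper_card/properP; split; last by exists i; rewrite inE.
by apply/subsetP => j; rewrite !inE => vjy; rewrite eq_v' //; apply: contraTneq vjy => ->.
Qed.

Lemma vwinner_sub k v v' w : (forall j, v j == w -> v' j == w) ->
  vwinner k v = w -> vwinner k v' = w.
Proof.
have le_card (u u' : votes p) : (forall j, u j == X -> u' j == X) ->
    (#|[set j | u j == X]| <= #|[set j | u' j == X]|)%N.
  by move=> sub_uu'; apply/subset_leq_card/subsetP => j; rewrite !inE; apply: sub_uu'.
rewrite /vwinner; case: w => sub_vv'.
- have /le_card le_v'v : forall j, v' j == X -> v j == X.
    by move=> j; have := sub_vv' j; case: (v j); case: (v' j) => //= ->.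
  case: leqP => // lt_v; case: leqP => // le_v' _.
  by have := leq_trans le_v' le_v'v; rewrite leqNgt lt_v.
- have /le_card le_vv' := sub_vv'.
  case: leqP => // le_v; case: leqP => // lt_v' _.
  by have := leq_trans le_v le_vv'; rewrite leqNgt lt_v'.
Qed.

Lemma Maj_vwinner k (R : profile p) : Maj k R = vwinner k ([ffun j => R j] : votes p).
Proof.
rewrite /vwinner.
suff -> : [set j | ([ffun j => R j] : votes p) j == X] = [set j | R j == X] by [].
by apply/setP => j; rewrite !inE ffunE.
Qed.

Lemma exists_insincere_voter k (R : profile p) v : vwinner k v != Maj k R ->
  exists2 i, R i != vwinner k v & v i == vwinner k v.
Proof.
set w := vwinner k v => w_ne.
case: (pickP (fun i => (R i != w) && (v i == w))) => [i /andP[]|none]; first by exists i.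
case/eqP: w_ne; rewrite Maj_vwinner; symmetry; apply: (vwinner_sub (v := v)) => // j vj.
by rewrite ffunE; move: (none j); rewrite vj andbT => /negbFE.
Qed.

End Votes.

Lemma votes_of_deviate p (s : sprofile p) (i : agent p) si (j : agent p) :
  votes_of (deviate s i si) j = if j == i then vote si else votes_of s j.
Proof. by rewrite !ffunE /deviate; case: eqP. Qed.

Lemma conf_run_ext p k (s s' : sprofile p) v pi t rest :
  {in rest, forall j, confirm (s' j) = confirm (s j)} ->
  conf_run k s' v pi t rest = conf_run k s v pi t rest.
Proof.
elim: rest t => [|j rest IH] t //= eq_conf.
rewrite eq_conf ?mem_head // IH // => j' j'_rest.
by rewrite eq_conf // in_cons j'_rest orbT.
Qed.

Lemma dropS_cons (T : Type) (s rest : seq T) t x :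
  drop t s = x :: rest -> drop t.+1 s = rest.
Proof. by move=> drop_t; rewrite -[t.+1]add1n -drop_drop drop_t /= drop0. Qed.

Lemma node_out_cons p k (s : sprofile p) v pi t i rest :
  drop t pi = i :: rest ->
  node_out k s v pi t =
  if confirm (s i) v pi t then dirac (vwinner k v) else node_out k s v pi t.+1.
Proof. by move=> drop_t; rewrite /node_out drop_t (dropS_cons drop_t). Qed.

Lemma node_out_deviate_cons p k (s : sprofile p) i si v pi t rest :
  drop t pi = i :: rest -> i \notin rest ->
  node_out k (deviate s i si) v pi t =
  if confirm si v pi t then dirac (vwinner k v) else node_out k s v pi t.+1.
Proof.
move=> drop_t i_notin; rewrite (node_out_cons k _ v drop_t) /deviate eqxx.
congr (if _ then _ else _); rewrite /node_out (dropS_cons drop_t).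
by apply: conf_run_ext => j j_rest; case: eqP j_rest i_notin => // -> ->.
Qed.

Section Mechanism.
Variables (p k : nat) (R : profile p).
Hypotheses (k_ge1 : (1 <= k)%N) (k_lep : (k <= p)%N).
Implicit Types (v : votes p) (s : sprofile p).

Definition bi_node_out v (rest : seq (agent p)) : lottery :=
  if has (fun j => R j == vwinner k v) rest then dirac (vwinner k v) else vshare v.

Definition bi_chance_out v : lottery :=
  fun y => uavg (fun pi : (tbar k v).-tuple (agent p) => bi_node_out v pi y).

Lemma bi_node_out_ge0 v rest y : 0 <= bi_node_out v rest y.
Proof. by rewrite /bi_node_out; case: ifP => _; rewrite ?dirac_ge0 ?vshare_ge0. Qed.

Lemma bi_node_out_le1 v rest y : bi_node_out v rest y <= 1.
Proof. by rewrite /bi_node_out; case: ifP => _; rewrite ?dirac_le1 ?vshare_le1. Qed.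

Lemma bi_node_out_cons_ge v i rest (b : bool) :
  (if b then dirac (vwinner k v) else bi_node_out v rest) (R i)
    <= bi_node_out v (i :: rest) (R i).
Proof.
rewrite [in leRHS]/bi_node_out /=; case: eqP => [Ri|/eqP Ri] /=.
  by rewrite {2}/dirac Ri eqxx; case: b; rewrite ?dirac_le1 ?bi_node_out_le1.
by case: b; rewrite // {1}/dirac (negbTE Ri) bi_node_out_ge0.
Qed.

Lemma bi_node_out_cons v i rest (o : lottery) :
  o =1 dirac (vwinner k v) \/ o =1 bi_node_out v rest ->
  dirac (vwinner k v) (R i) <= o (R i) -> bi_node_out v rest (R i) <= o (R i) ->
  o =1 bi_node_out v (i :: rest).
Proof.
rewrite /bi_node_out /=; set w := vwinner k v.
case: (boolP (has _ rest)) => [_|_]; rewrite ?orbT ?orbF.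
  by case=> o_eq _ _ y; rewrite o_eq.
case: eqP => [Ri|/eqP Ri] [] o_eq; rewrite o_eq => le_dirac le_vshare y; rewrite ?o_eq //.
- by apply: vshare_eq_dirac; move: le_dirac; rewrite Ri /dirac eqxx.
- rewrite (vshare_eq_dirac (w := w)) //; apply: (vshare_ge1 Ri).
  by move: le_vshare; rewrite /dirac (negbTE Ri).
Qed.

Lemma spe_node_out s : SPE k R s ->
  forall v (pi : (tbar k v).-tuple (agent p)), uniq pi ->
  forall t, node_out k s v pi t =1 bi_node_out v (drop t pi).
Proof.
move=> [_ [_ spe_node]] v pi uniq_pi t.
have [rest drop_t] : exists rest, drop t pi = rest by eexists.
rewrite drop_t; elim: rest t drop_t => [|i rest IH] t drop_t.
  by rewrite /node_out drop_t.
have lt_t : (t < tbar k v)%N.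
  by rewrite -(size_tuple pi) -subn_gt0 -size_drop drop_t.
have i_notin : i \notin rest.
  by have := drop_uniq t uniq_pi; rewrite drop_t => /andP[].
have out_next := IH _ (dropS_cons drop_t).
have deviate_to b := spe_node v pi uniq_pi t lt_t i
  (Strategy (vote (s i)) (fun _ _ _ => b)).
move: (deviate_to true) (deviate_to false).
rewrite !(node_out_deviate_cons k s _ v drop_t) //= => /not_sprefers le_dirac.
move=> /not_sprefers; rewrite out_next => le_bi; apply: bi_node_out_cons => //.
by rewrite (node_out_cons k _ v drop_t); case: confirm; [left | right].
Qed.

Lemma spe_chance_out s s' : SPE k R s ->
  (forall j, confirm (s' j) = confirm (s j)) ->
  forall v, chance_out k s' v =1 bi_chance_out v.
Proof.
move=> spe_s eq_conf v y; apply: eq_uavg => pi uniq_pi.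
have := spe_node_out spe_s uniq_pi 0 y; rewrite drop0 => <-.
by rewrite /node_out; congr (_ y); apply: conf_run_ext => j _; apply: eq_conf.
Qed.

Lemma tbar_le_card v : (tbar k v <= #|agent p|)%N.
Proof. by rewrite card_ord /tbar; case: ifP => _; lia. Qed.

Lemma tbar_le_card_dissent v :
  (tbar k v <= #|[set j | R j != vwinner k v]|)%N = (vwinner k v != Maj k R).
Proof.
rewrite /tbar /Maj; case: (vwinner k v) => /=.
  by rewrite (set_opt_neq R (isT : X != SQ)); case: leqP.
rewrite card_opt_neq; case: (leqP (p + k)) => /= h; last by lia.
by apply/negbTE; rewrite -ltnNge; lia.
Qed.

Lemma bi_chance_out_le1 v y : bi_chance_out v y <= 1.
Proof.
rewrite -(uavg_cst 1 (tbar_le_card v)); apply: ler_uavg => pi _.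
exact: bi_node_out_le1.
Qed.

Lemma bi_chance_out_Maj v : vwinner k v = Maj k R -> bi_chance_out v =1 dirac (Maj k R).
Proof.
move=> wv y; rewrite -(uavg_cst (dirac (Maj k R) y) (tbar_le_card v)).
apply: eq_uavg => pi uniq_pi; rewrite /bi_node_out wv; case: hasP => // no_ally.
have /negP[] : ~~ (tbar k v <= #|[set j | R j != Maj k R]|)%N.
  by rewrite -wv tbar_le_card_dissent wv eqxx.
apply: (uniq_tuple_sub_card uniq_pi) => j j_pi; rewrite inE.
by apply/negP => Rj; apply: no_ally; exists j.
Qed.

Lemma bi_chance_out_lt v v' y : vwinner k v' = vwinner k v -> vwinner k v != Maj k R ->
  (#|[set j | v j == y]| < #|[set j | v' j == y]|)%N ->
  bi_chance_out v y < bi_chance_out v' y.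
Proof.
move=> wv' not_Maj lt_card; have eq_tbar : tbar k v' = tbar k v by rewrite /tbar wv'.
rewrite /bi_chance_out eq_tbar; apply: ltr_uavg => [pi _|].
  by rewrite /bi_node_out wv'; case: ifP => _ //; apply/ltW/ltr_vshare.
rewrite -tbar_le_card_dissent in not_Maj.
have [pi uniq_pi sub_pi] := exists_uniq_tuple_sub not_Maj.
exists pi => //; rewrite /bi_node_out wv'.
have -> : has (fun j => R j == vwinner k v) pi = false.
  by apply/hasP => -[j /sub_pi]; rewrite inE => /negbTE ->.
exact: ltr_vshare.
Qed.

Lemma bi_chance_out_le_vshare v y : y != vwinner k v -> bi_chance_out v y <= vshare v y.
Proof.
move=> y_ne; rewrite -(uavg_cst (vshare v y) (tbar_le_card v)).
apply: ler_uavg => pi _; rewrite /bi_node_out; case: ifP => _ //.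
by rewrite /dirac (negbTE y_ne) vshare_ge0.
Qed.

Lemma spe_vwinner s : SPE k R s -> vwinner k (votes_of s) = Maj k R.
Proof.
move=> spe_s; set v := votes_of s; set w := vwinner k v.
case: (eqVneq w (Maj k R)) => // w_ne; exfalso.
have [i Ri_ne vi] := exists_insincere_voter w_ne.
have vi_ne : v i != R i by rewrite (eqP vi) eq_sym.
set s' := deviate s i (Strategy (R i) (confirm (s i))); set v' := votes_of s'.
have conf_s' j : confirm (s' j) = confirm (s j).
  by rewrite /s' /deviate; case: eqP => // ->.
have /not_sprefers := proj1 spe_s i (Strategy (R i) (confirm (s i))).
rewrite -/s' /game_out (spe_chance_out spe_s conf_s').
rewrite (spe_chance_out spe_s (fun j => erefl)) -/v.
have lt_card : (#|[set j | v j == R i]| < #|[set j | v' j == R i]|)%N.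
  apply: (card_set_vote_lt (i := i)) => [j ji|//|];
    by rewrite /v' /s' votes_of_deviate ?eqxx // (negbTE ji).
case: (eqVneq (vwinner k v') w) => [wv'|wv'].
  by rewrite leNgt (bi_chance_out_lt wv' w_ne lt_card).
have Maj_Ri : Maj k R = R i by apply: (neq_opt_eq (w := w)); rewrite // eq_sym.
have wv'_Maj : vwinner k v' = Maj k R by rewrite Maj_Ri; apply: (neq_opt_eq wv').
rewrite (bi_chance_out_Maj wv'_Maj) Maj_Ri /dirac eqxx => le1.
have := le_trans le1 (bi_chance_out_le_vshare Ri_ne).
by rewrite leNgt (vshare_lt1 vi_ne).
Qed.

Lemma spe_game_out s : SPE k R s -> game_out k s =1 dirac (Maj k R).
Proof.
move=> spe_s y; rewrite /game_out (spe_chance_out spe_s (fun j => erefl)).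
exact: bi_chance_out_Maj (spe_vwinner spe_s) y.
Qed.

Definition truthful : sprofile p :=
  fun j => Strategy (R j) (fun v _ _ => R j == vwinner k v).

Lemma conf_run_truthful v pi t rest : conf_run k truthful v pi t rest = bi_node_out v rest.
Proof.
elim: rest t => [|j rest IH] t //=.
by rewrite /bi_node_out /=; case: eqP => //= _; apply: IH.
Qed.

Lemma conf_run_deviate_truthful i si v pi t rest :
  conf_run k (deviate truthful i si) v pi t rest (R i) <= bi_node_out v rest (R i).
Proof.
elim: rest t => [|j rest IH] t /=; first by rewrite /bi_node_out.
case: (eqVneq j i) => [->|ji].
  have -> : deviate truthful i si i = si by rewrite /deviate eqxx.
  apply: le_trans (bi_node_out_cons_ge v i rest (confirm si v pi t)).
  by case: confirm => //; apply: IH.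
have -> : deviate truthful i si j = truthful j by rewrite /deviate (negbTE ji).
by rewrite /bi_node_out /=; case: eqP => //= _; apply: IH.
Qed.

Lemma chance_out_truthful v : chance_out k truthful v =1 bi_chance_out v.
Proof. by move=> y; apply: eq_uavg => pi _; rewrite /node_out drop0 conf_run_truthful. Qed.

Lemma chance_out_deviate_truthful i si v :
  chance_out k (deviate truthful i si) v (R i) <= bi_chance_out v (R i).
Proof.
apply: ler_uavg => pi _; rewrite /node_out drop0.
exact: conf_run_deviate_truthful.
Qed.

Lemma vwinner_truthful : vwinner k (votes_of truthful) = Maj k R.
Proof. by rewrite Maj_vwinner. Qed.

Lemma game_out_truthful : game_out k truthful =1 dirac (Maj k R).
Proof.
by move=> y; rewrite /game_out chance_out_truthful bi_chance_out_Maj ?vwinner_truthful.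
Qed.

Lemma truthful_SPE : SPE k R truthful.
Proof.
split; [|split].
- move=> i si; apply/not_sprefers.
  set v' := votes_of (deviate truthful i si).
  rewrite game_out_truthful; apply: le_trans (chance_out_deviate_truthful i si v') _.
  case: (eqVneq (R i) (Maj k R)) => [->|Ri]; first by rewrite /dirac eqxx bi_chance_out_le1.
  suff wv' : vwinner k v' = Maj k R by rewrite bi_chance_out_Maj.
  rewrite -vwinner_truthful; apply: (vwinner_sub (v := votes_of truthful)) => // j.
  rewrite /v' votes_of_deviate; case: (eqVneq j i) => [->|//].
  by rewrite ffunE /= vwinner_truthful (negbTE Ri).
- move=> v i si; apply/not_sprefers; rewrite chance_out_truthful.
  exact: chance_out_deviate_truthful.
- move=> v pi _ t _ i si; apply/not_sprefers; rewrite /node_out conf_run_truthful.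
  exact: conf_run_deviate_truthful.
Qed.

End Mechanism.

Theorem proposition5 (p k : nat) (hk1 : (1 <= k)%N) (hkp : (k <= p)%N)
    (R : profile p) :
  (forall s : sprofile p, SPE k R s -> forall y, game_out k s y = dirac (Maj k R) y)
  /\ (exists s : sprofile p, SPE k R s /\ forall y, game_out k s y = dirac (Maj k R) y).
Proof.
split; first exact: spe_game_out.
by exists (truthful k R); split; [exact: truthful_SPE | exact: game_out_truthful].
Qed.
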